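(* Let $d\ge 3$, $n\ge 2$, and let $F$ be an $n$-lattice framework in $\mathbb{R}^d$. If for every $1\le i\le d$ and every $0\le c\le n-1$ the framework $F'_{i,c}$ in $\mathbb{R}^{d-1}$ is infinitesimally rigid, then $F$ is infinitesimally rigid.
   Context: A framework in $\mathbb{R}^d$ is a finite graph whose vertices (joints) are distinct points of $\mathbb{R}^d$ and whose edges (bars) are segments between pairs of joints. An infinitesimal motion of $\mathbb{R}^d$ is a map $f:\mathbb{R}^d\to\mathbb{R}^d$ with $(f(x)-f(y))\cdot(x-y)=0$ for all $x,y$. For a framework $F$ with joint set $X$, an infinitesimal motion of $F$ is a map $g:X\to\mathbb{R}^d$ with $(g(x)-g(y))\cdot(x-y)=0$ for every bar $xy$; $F$ is infinitesimally rigid if every infinitesimal motion of $F$ is the restriction to $X$ of an infinitesimal motion of $\mathbb{R}^d$. An $n$-lattice framework in $\mathbb{R}^d$ is a framework whose joints are the points $(x_1,\ldots,x_d)$ with all $x_i\in\{0,1,\ldots,n-1\}$ (bars arbitrary). For such $F$, $F_{i,c}$ is the subframework induced by all joints whose $i$-th coordinate equals $c$, and $F'_{i,c}$ is the framework in $\mathbb{R}^{d-1}$ obtained from $F_{i,c}$ by deleting the $i$-th coordinate of every joint (keeping the same bars); it is an $n$-lattice framework in $\mathbb{R}^{d-1}$. *)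

From HB Require Import structures.
From mathcomp Require Import all_boot all_order all_algebra.
From mathcomp Require Import reals.
Set Implicit Arguments. Unset Strict Implicit. Unset Printing Implicit Defensive.
Import Order.TTheory GRing.Theory Num.Theory.
Local Open Scope ring_scope.

Section Defs.
Variable R : realType.

Definition dot (d : nat) (u v : 'rV[R]_d) : R := \sum_(j < d) u 0 j * v 0 j.

Definition inf_motion_space (d : nat) (f : 'rV[R]_d -> 'rV[R]_d) : Prop :=
  forall x y : 'rV[R]_d, dot (f x - f y) (x - y) = 0.

Definition lattice (d n : nat) := {ffun 'I_d -> 'I_n}.

Definition pt (d n : nat) (p : lattice d n) : 'rV[R]_d :=
  \row_(j < d) ((p j : nat)%:R).

(* an n-lattice framework in R^d is given by its bar relation on the joints;
   F x y means that there is a bar between x and y *)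
Definition inf_motion_lattice (d n : nat) (F : rel (lattice d n))
  (g : lattice d n -> 'rV[R]_d) : Prop :=
  forall x y, F x y -> dot (g x - g y) (pt x - pt y) = 0.

Definition inf_rigid (d n : nat) (F : rel (lattice d n)) : Prop :=
  forall g : lattice d n -> 'rV[R]_d, inf_motion_lattice F g ->
  exists f : 'rV[R]_d -> 'rV[R]_d,
    inf_motion_space f /\ forall x, g x = f (pt x).
End Defs.

Definition ins_coord (d n : nat) (i : 'I_d.+1) (c : 'I_n) (q : lattice d n)
  : lattice d.+1 n :=
  [ffun j => if unlift i j is Some k then q k else c].

(* F'_{i,c}: subframework induced on joints with i-th coordinate c,
   with the i-th coordinate deleted *)
Definition section_fw (d n : nat) (F : rel (lattice d.+1 n)) (i : 'I_d.+1)
  (c : 'I_n) : rel (lattice d n) :=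
  fun q1 q2 => F (ins_coord i c q1) (ins_coord i c q2).

(* An infinitesimal motion of R^m is exactly a map x |-> b + x A with A
   skew-symmetric.  Rigidity of the sections therefore says that on each slab
   x_j = c, away from coordinate j, the motion g is such a map, with a linear
   part M(j,c) that can be read off from unit steps.  Computing the mixed
   second difference of g on the unit square spanned by e_m and e_k once in
   the slabs normal to e_m and once in those normal to e_k gives
   M(m,c) - M(m,0) = c (M(k,1) - M(k,0)) off the indices m, k.  So
   M(m,1) - M(m,0) is symmetric in (m,k) and skew in (k,l), hence zero, and
   all the M(j,c) agree with the skew matrix S = M(j,0), whose k-th row is
   g e_k - g 0.  As d >= 3, two joints x, y are linked by a joint sharing
   one coordinate with x and another with y, both different from a given
   component l; so g x - g y = (x - y) S and g is the restriction of
   x |-> g 0 + x S. *)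

From HB Require Import structures.
From mathcomp Require Import all_boot all_order all_algebra reals.
From mathcomp Require Import lra.
Set Implicit Arguments. Unset Strict Implicit. Unset Printing Implicit Defensive.
Import Order.TTheory GRing.Theory Num.Theory.
Local Open Scope ring_scope.

Lemma exists_ord_neq2 m (k l : 'I_m.+3) : exists j, (k != j) && (l != j).
Proof.
have [<-|kl] := eqVneq k l; first by exists (lift k ord0); rewrite andbb neq_lift.
have [k' -> _] := unlift_some kl.
exists (lift k (lift k' ord0)); rewrite neq_lift (inj_eq (@lift_inj _ k)).
by rewrite neq_lift.
Qed.

Lemma sym_antisym_eq0 (R : realDomainType) (T : eqType) (X : T -> T -> T -> R) :
  (forall a b c, a != b -> b != c -> a != c -> X a b c = X b a c) ->
  (forall a b c, a != b -> b != c -> a != c -> X a b c = - X a c b) ->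
  forall a b c, a != b -> b != c -> a != c -> X a b c = 0.
Proof.
move=> sym antisym a b c ab bc ac.
have [ba cb ca] : [/\ b != a, c != b & c != a] by rewrite ![_ == a]eq_sym [c == b]eq_sym.
have := sym a b c ab bc ac; have := antisym b a c ba ac bc.
have := sym b c a bc ca ba; have := antisym c b a cb ba ca.
have := sym c a b ca ab cb; have := antisym a b c ab bc ac.
lra.
Qed.

Section InfMotions.
Variables (R : realType) (m : nat).
Implicit Types (u v w x y b : 'rV[R]_m) (A : 'M[R]_m) (f : 'rV[R]_m -> 'rV[R]_m).

Lemma dotE u v : dot u v = (u *m v^T) 0 0.
Proof. by rewrite /dot mxE; apply: eq_bigr => k _; rewrite mxE. Qed.

Lemma dotC u v : dot u v = dot v u.
Proof. by apply: eq_bigr => k _; rewrite mulrC. Qed.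

Lemma dotBl u v w : dot (u - v) w = dot u w - dot v w.
Proof. by rewrite !dotE mulmxBl !mxE. Qed.

Lemma dotBr u v w : dot w (u - v) = dot w u - dot w v.
Proof. by rewrite ![dot w _]dotC dotBl. Qed.

Lemma dot_delta u k : dot u 'e_k = u 0 k.
Proof.
rewrite /dot (bigD1 k) //= big1 ?addr0; first by rewrite mxE !eqxx mulr1.
by move=> i /negbTE ki; rewrite mxE ki andbF mulr0.
Qed.

Lemma dot_mul_skew v A : A^T = - A -> dot (v *m A) v = 0.
Proof.
move=> skewA; set s := dot _ _.
have : s = - s.
  rewrite {1}/s dotE -[in LHS](trmxK (v *m A *m v^T)) mxE.
  by rewrite trmx_mul trmxK trmx_mul mulmxA skewA mulmxN mulNmx mxE -dotE.
lra.
Qed.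

Lemma mulmx_entry_eq_off u (A B : 'M[R]_m) j l :
  u 0 j = 0 -> (forall k, k != j -> A k l = B k l) -> (u *m A) 0 l = (u *m B) 0 l.
Proof.
move=> uj AB; rewrite !mxE; apply: eq_bigr => k _.
by case: (eqVneq k j) => [->|/AB->]; rewrite ?uj ?mul0r.
Qed.

Lemma inf_motion_antisym f : inf_motion_space f -> f 0 = 0 ->
  forall x y, dot (f x) y = - dot (f y) x.
Proof.
move=> motion_f f0 x y.
have orth z : dot (f z) z = 0 by have := motion_f z 0; rewrite f0 !subr0.
by have := motion_f x y; rewrite dotBl !dotBr !orth; lra.
Qed.

Lemma inf_motion_spaceP f :
  inf_motion_space f <-> exists b A, A^T = - A /\ forall x, f x = b + x *m A.
Proof.
split=> [motion_f | [b [A [skewA fE]]] x y]; last first.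
  by rewrite !fE opprD addrACA subrr add0r -mulmxBl dot_mul_skew.
pose h x := f x - f 0.
have fE x : f x = f 0 + h x by rewrite addrC subrK.
have h_anti : forall x y, dot (h x) y = - dot (h y) x.
  apply: inf_motion_antisym; last by rewrite /h subrr.
  by move=> x y; rewrite /h opprB addrA subrK motion_f.
clearbody h.
pose A := \matrix_(k, l) h 'e_k 0 l.
have skewA : A^T = - A.
  by apply/matrixP => k l; rewrite !mxE -!dot_delta h_anti.
exists (f 0), A; split=> // x; rewrite fE; congr (_ + _); apply/rowP => l.
rewrite !mxE -dot_delta h_anti dotC /dot -sumrN.
apply: eq_bigr => k _; rewrite -mulrN; congr (_ * _).
by rewrite mxE -!dot_delta h_anti opprK.
Qed.

End InfMotions.

Section Slabs.
Variables (R : realType) (d n : nat).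
Implicit Types (j : 'I_d.+1) (c : 'I_n) (x y : lattice d.+1 n).

Lemma dot_col' j (u v : 'rV[R]_d.+1) :
  dot u v = u 0 j * v 0 j + dot (col' j u) (col' j v).
Proof.
by rewrite /dot (bigD1_ord j) //=; congr (_ + _); apply: eq_bigr => k _; rewrite !mxE.
Qed.

Definition del_coord j x : lattice d n := [ffun k => x (lift j k)].

Lemma ins_del_coord j c x : x j = c -> ins_coord j c (del_coord j x) = x.
Proof.
move=> xj; apply/ffunP => t; rewrite ffunE.
by case: unliftP => [k ->|->]; rewrite ?ffunE.
Qed.

Lemma pt_del_coord j x : pt R (del_coord j x) = col' j (pt R x).
Proof. by apply/rowP => k; rewrite !mxE ffunE. Qed.

Lemma col'_pt_ins_coord j c (q : lattice d n) : col' j (pt R (ins_coord j c q)) = pt R q.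
Proof. by apply/rowP => k; rewrite !mxE ffunE liftK. Qed.

Definition expand_mx j (A : 'M[R]_d) : 'M[R]_d.+1 :=
  \matrix_(k, l) if (unlift j k, unlift j l) is (Some k', Some l') then A k' l' else 0.

Lemma expand_mx_skew j (A : 'M[R]_d) : A^T = - A -> (expand_mx j A)^T = - expand_mx j A.
Proof.
move=> skewA; apply/matrixP => k l; rewrite !mxE.
case: (unlift j k) => [k'|]; case: (unlift j l) => [l'|]; rewrite ?oppr0 //.
by move/matrixP: skewA => /(_ k' l'); rewrite !mxE.
Qed.

Lemma mul_expand_mx j (A : 'M[R]_d) (u : 'rV[R]_d.+1) l :
  (u *m expand_mx j A) 0 (lift j l) = (col' j u *m A) 0 l.
Proof.
rewrite !mxE (bigD1_ord j) //= !mxE unlift_none mulr0 add0r.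
by apply: eq_bigr => k _; rewrite !mxE !liftK.
Qed.

Definition rigid_on_slab (g : lattice d.+1 n -> 'rV[R]_d.+1) j c :=
  exists A : 'M[R]_d.+1, A^T = - A /\
    forall x y, x j = c -> y j = c -> forall l, l != j ->
      g x 0 l - g y 0 l = ((pt R x - pt R y) *m A) 0 l.

Lemma rigid_on_slab_section (F : rel (lattice d.+1 n)) g j c :
  inf_motion_lattice F g -> inf_rigid R (section_fw F j c) -> rigid_on_slab g j c.
Proof.
move=> motion_g rigid_section.
pose g' q := col' j (g (ins_coord j c q)).
have motion_g' : inf_motion_lattice (section_fw F j c) g'.
  move=> q1 q2 /motion_g; rewrite (dot_col' j).
  have -> : (pt R (ins_coord j c q1) - pt R (ins_coord j c q2)) 0 j = 0.
    by rewrite !mxE !ffunE unlift_none subrr.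
  rewrite mulr0 add0r => <-; rewrite -[pt R q1](col'_pt_ins_coord j c).
  by rewrite -[pt R q2](col'_pt_ins_coord j c); congr dot; apply/rowP => k; rewrite !mxE.
have [f' [motion_f' g'E]] := rigid_section g' motion_g'.
have [b' [A' [skewA' f'E]]] := (inf_motion_spaceP f').1 motion_f'.
exists (expand_mx j A'); split; first exact: expand_mx_skew.
move=> x y xj yj l; rewrite eq_sym => /unlift_some[l' -> _].
have gE (z : lattice d.+1 n) :
    z j = c -> g z 0 (lift j l') = (b' + col' j (pt R z) *m A') 0 l'.
  by move=> zj; rewrite -pt_del_coord -f'E -g'E mxE ins_del_coord.
rewrite gE // gE // mul_expand_mx linearB mulmxBl !mxE; lra.
Qed.
End Slabs.

Section LatticePoints.
Variables (R : realType) (d n : nat).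
Implicit Types (x : lattice d n) (k : 'I_d) (v : 'I_n).

Definition set_coord x k v : lattice d n := [ffun t => if t == k then v else x t].

Lemma set_coord_eq x k v : set_coord x k v k = v.
Proof. by rewrite ffunE eqxx. Qed.

Lemma set_coord_neq x k v t : t != k -> set_coord x k v t = x t.
Proof. by rewrite ffunE => /negbTE ->. Qed.

Lemma set_coord_id x k : set_coord x k (x k) = x.
Proof. by apply/ffunP => t; rewrite ffunE; case: eqVneq => [->|]. Qed.

Lemma set_coordC x k1 k2 v1 v2 : k1 != k2 ->
  set_coord (set_coord x k1 v1) k2 v2 = set_coord (set_coord x k2 v2) k1 v1.
Proof.
move=> k12; apply/ffunP => t; rewrite !ffunE.
by case: eqVneq => [->|//]; rewrite eq_sym (negbTE k12).
Qed.

Lemma mul_pt_set_coord p (M : 'M[R]_(d, p)) x k v l :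
  ((pt R (set_coord x k v) - pt R x) *m M) 0 l = ((v : nat)%:R - (x k : nat)%:R) * M k l.
Proof.
have -> : pt R (set_coord x k v) - pt R x = ((v : nat)%:R - (x k : nat)%:R) *: 'e_k.
  apply/rowP => t; rewrite !mxE ffunE eqxx /=.
  by case: eqVneq => [->|_]; rewrite ?subrr ?mulr1 ?mulr0.
by rewrite -scalemxAl -rowE !mxE.
Qed.

End LatticePoints.

Section SlabGluing.
Variables (R : realType) (d n : nat) (g : lattice d.+3 n.+2 -> 'rV[R]_d.+3).
Hypothesis slab_rigid : forall j c, rigid_on_slab g j c.
Implicit Types (j k l m : 'I_d.+3) (c : 'I_n.+2) (x y : lattice d.+3 n.+2).

Let one : 'I_n.+2 := Ordinal (isT : (1 < n.+2)%N).

Definition origin : lattice d.+3 n.+2 := [ffun => ord0].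

Definition axis_pt j c := set_coord origin j c.

Definition slab_mx j c : 'M[R]_d.+3 :=
  \matrix_(k, l) (g (set_coord (axis_pt j c) k one) 0 l - g (axis_pt j c) 0 l).

Definition origin_mx : 'M[R]_d.+3 :=
  \matrix_(k, l) (g (axis_pt k one) 0 l - g origin 0 l).

Lemma axis_pt0 j : axis_pt j ord0 = origin.
Proof. by rewrite -[RHS](set_coord_id origin j) ffunE. Qed.

Lemma slab_mx0 j : slab_mx j ord0 = origin_mx.
Proof. by apply/matrixP => k l; rewrite !mxE axis_pt0. Qed.

Lemma slab_mx_witness j c : exists A : 'M[R]_d.+3, A^T = - A /\
  (forall x y, x j = c -> y j = c -> forall l, l != j ->
     g x 0 l - g y 0 l = ((pt R x - pt R y) *m A) 0 l) /\
  forall k l, k != j -> l != j -> slab_mx j c k l = A k l.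
Proof.
have [A [skewA slabA]] := slab_rigid j c.
exists A; split=> //; split=> // k l kj lj.
have axis_j : axis_pt j c j = c by exact: set_coord_eq.
rewrite mxE slabA // ?mul_pt_set_coord; last by rewrite set_coord_neq 1?eq_sym.
by rewrite /axis_pt set_coord_neq // ffunE subr0 mul1r.
Qed.

Lemma slab_mx_diff j c x y l : x j = c -> y j = c -> l != j ->
  g x 0 l - g y 0 l = ((pt R x - pt R y) *m slab_mx j c) 0 l.
Proof.
have [A [_ [slabA agree]]] := slab_mx_witness j c.
move=> xj yj lj; rewrite slabA //.
by apply: (mulmx_entry_eq_off (j := j)) => [|k kj]; rewrite ?agree // !mxE xj yj subrr.
Qed.

Lemma slab_mx_skew j c k l : k != j -> l != j -> slab_mx j c k l = - slab_mx j c l k.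
Proof.
have [A [skewA [_ agree]]] := slab_mx_witness j c.
by move=> kj lj; rewrite !agree //; move/matrixP: skewA => /(_ l k); rewrite !mxE.
Qed.

Lemma slab_mx_step j c x k v l : x j = c -> k != j -> l != j ->
  g (set_coord x k v) 0 l - g x 0 l = ((v : nat)%:R - (x k : nat)%:R) * slab_mx j c k l.
Proof.
move=> xj kj lj.
rewrite (slab_mx_diff (j := j) (c := c)) ?mul_pt_set_coord //.
by rewrite set_coord_neq 1?eq_sym.
Qed.

(* Both sides are the mixed second difference of [g] on the square with
   corners [0], [e_k], [c e_m], [c e_m + e_k]. *)
Lemma slab_mx_shift m k l c : m != k -> k != l -> m != l ->
  slab_mx m c k l - slab_mx m ord0 k l =
  (c : nat)%:R * (slab_mx k one m l - slab_mx k ord0 m l).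
Proof.
move=> mk kl ml; have lk : l != k by rewrite eq_sym.
have origin0 t : origin t = ord0 by rewrite ffunE.
have step1 : g (set_coord (axis_pt m c) k one) 0 l - g (axis_pt k one) 0 l =
    (c : nat)%:R * slab_mx k one m l.
  rewrite /axis_pt set_coordC // (slab_mx_step (j := k) (c := one)) ?set_coord_eq //.
  by rewrite set_coord_neq // origin0 subr0.
have step0 : g (axis_pt m c) 0 l - g origin 0 l = (c : nat)%:R * slab_mx k ord0 m l.
  by rewrite (slab_mx_step (j := k) (c := ord0)) ?origin0 ?subr0.
rewrite mulrBr -step1 -step0 [slab_mx m c k l]mxE [slab_mx m ord0 k l]mxE axis_pt0.
rewrite -/(axis_pt k one); lra.
Qed.

Lemma slab_mx_one m k l : m != k -> k != l -> m != l ->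
  slab_mx m one k l = slab_mx m ord0 k l.
Proof.
move=> mk kl ml; apply/eqP; rewrite -subr_eq0; apply/eqP; move: m k l mk kl ml.
apply: (sym_antisym_eq0 (X := fun m k l => slab_mx m one k l - slab_mx m ord0 k l)).
  by move=> m k l mk kl ml; rewrite slab_mx_shift // mul1r.
move=> m k l mk kl ml; have [km lm] : k != m /\ l != m by rewrite !(eq_sym _ m).
rewrite [slab_mx m one k l]slab_mx_skew // [slab_mx m ord0 k l]slab_mx_skew //.
by rewrite opprB opprK addrC.
Qed.

Lemma slab_mx_const m c k l : k != m -> l != m -> slab_mx m c k l = origin_mx k l.
Proof.
move=> km lm; rewrite -(slab_mx0 m).
have [<-|kl] := eqVneq k l.
  by have := slab_mx_skew c km km; have := slab_mx_skew ord0 km km; lra.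
have [mk ml] : m != k /\ m != l by rewrite !(eq_sym m).
have := slab_mx_shift c mk kl ml.
by rewrite slab_mx_one // subrr mulr0 => /eqP; rewrite subr_eq0 => /eqP.
Qed.

Lemma origin_mx_skew : origin_mx^T = - origin_mx.
Proof.
apply/matrixP => k l; have [j /andP[kj lj]] := exists_ord_neq2 k l.
by rewrite [LHS]mxE [RHS]mxE -(slab_mx0 j) slab_mx_skew.
Qed.

Lemma slab_diff_origin m x y l : x m = y m -> l != m ->
  g x 0 l - g y 0 l = ((pt R x - pt R y) *m origin_mx) 0 l.
Proof.
move=> xy lm; rewrite (slab_mx_diff (j := m) (c := y m)) //.
apply: (mulmx_entry_eq_off (j := m)) => [|k km]; last exact: slab_mx_const.
by rewrite !mxE xy subrr.
Qed.

Lemma lattice_diff x y l : g x 0 l - g y 0 l = ((pt R x - pt R y) *m origin_mx) 0 l.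
Proof.
have [m /andP[lm _]] := exists_ord_neq2 l l.
have [j /andP[mj lj]] := exists_ord_neq2 m l.
pose z := set_coord y m (x m).
rewrite -(subrKA (g z 0 l)) -(subrKA (pt R z)) mulmxDl [RHS]mxE.
rewrite (slab_diff_origin (m := m)) ?set_coord_eq //.
by rewrite (slab_diff_origin (m := j)) ?set_coord_neq // eq_sym.
Qed.

Lemma lattice_affine : exists b A, A^T = - A /\ forall x, g x = b + pt R x *m A.
Proof.
exists (g origin), origin_mx; split=> [|x]; first exact: origin_mx_skew.
have pt_origin : pt R origin = 0 by apply/rowP => k; rewrite !mxE ffunE.
apply/rowP => l; rewrite [RHS]mxE.
by have := lattice_diff x origin l; rewrite pt_origin subr0 => <-; rewrite subrKC.
Qed.

End SlabGluing.

Theorem corollary7 (R : realType) (d n : nat) (F : rel (lattice d.+1 n)) :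
  (3 <= d.+1)%N -> (2 <= n)%N ->
  (forall (i : 'I_d.+1) (c : 'I_n), inf_rigid R (section_fw F i c)) ->
  inf_rigid R F.
Proof.
case: d F => [|[|d]] F // _; case: n F => [|[|n]] F // _ rigid_sections g motion_g.
have slabs j c := rigid_on_slab_section motion_g (rigid_sections j c).
have [b [A [skewA gE]]] := lattice_affine slabs.
by exists (fun z => b + z *m A); split=> //; apply/inf_motion_spaceP; exists b, A.
Qed.
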